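(* Let $(G,v)$ be a Hamel space over an ordered field $C$. Then $v(G\setminus\{0\})$ is a $C$-linearly independent subset of $G$.
   Context: Let $C$ be an ordered field. A $2$-ordered $C$-vector space is a $C$-vector space $G$ with two total orderings $<_0,<_1$ such that $G$ is an ordered $C$-vector space with respect to each. Put $G_\infty=G\cup\{\infty\}$, with $G<_0\infty$, $G<_1\infty$. A Hamel valuation on $G$ is a map $v:G\to G_\infty$ such that for all $x,y\in G$ and $\lambda\in C^{\times}$: $v(x)=\infty$ iff $x=0$; $v(x+y)\ge_0\min_0(v(x),v(y))$; $v(\lambda x)=v(x)$; if $0<_1x<_1y$ then $v(x)\ge_0v(y)$; $v(v(x))=v(x)$ (with $v(\infty)=\infty$); and $v(x)>_10$. A Hamel space is such a pair $(G,v)$. *)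

From HB Require Import structures.
From mathcomp Require Import all_boot all_order all_algebra.
From Stdlib Require Import ClassicalEpsilon.
Set Implicit Arguments. Unset Strict Implicit. Unset Printing Implicit Defensive.
Import Order.TTheory GRing.Theory Num.Theory.
Local Open Scope ring_scope.

Definition ordered_vspace_order (C : realFieldType) (G : lmodType C)
    (lt : G -> G -> Prop) : Prop :=
  [/\ (forall x, ~ lt x x),
      (forall x y z, lt x y -> lt y z -> lt x z),
      (forall x y, [\/ lt x y, x = y | lt y x]),
      (forall x y z, lt x y -> lt (x + z) (y + z)) &
      (forall (l : C) x, 0 < l -> lt 0 x -> lt 0 (l *: x))].

(* G_oo = G u {oo} is modelled by [option G], [None] being oo. *)
Definition ltinf (G : Type) (lt : G -> G -> Prop) (a b : option G) : Prop :=
  match a, b with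
  | Some x, Some y => lt x y
  | Some _, None => True
  | None, _ => False
  end.

Definition leinf (G : Type) (lt : G -> G -> Prop) (a b : option G) : Prop :=
  a = b \/ ltinf lt a b.

Definition mininf (G : Type) (lt : G -> G -> Prop) (a b : option G) : option G :=
  if excluded_middle_informative (ltinf lt b a) then b else a.

Definition vext (G : Type) (v : G -> option G) (a : option G) : option G :=
  match a with Some x => v x | None => None end.

Definition hamel_valuation (C : realFieldType) (G : lmodType C)
    (lt0 lt1 : G -> G -> Prop) (v : G -> option G) : Prop :=
  (forall x, v x = None <-> x = 0) /\
  [/\ (forall x y, leinf lt0 (mininf lt0 (v x) (v y)) (v (x + y))),
      (forall (l : C) x, l != 0 -> v (l *: x) = v x),
      (forall x y, lt1 0 x -> lt1 x y -> leinf lt0 (v y) (v x)),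
      (forall x, vext v (v x) = v x) &
      (forall x, ltinf lt1 (Some 0) (v x))].

Definition hamel_space (C : realFieldType) (G : lmodType C)
    (lt0 lt1 : G -> G -> Prop) (v : G -> option G) : Prop :=
  [/\ ordered_vspace_order lt0, ordered_vspace_order lt1 & hamel_valuation lt0 lt1 v].

Definition lin_indep (C : realFieldType) (G : lmodType C) (S : G -> Prop) : Prop :=
  forall (s : seq G) (c : G -> C),
    uniq s -> (forall x, x \in s -> S x) ->
    \sum_(x <- s) c x *: x = 0 -> forall x, x \in s -> c x = 0.

(* Every value g = v x (x <> 0) is a fixed point of v, so v separates the
   points of v(G \ {0}). For a valuation, a linear combination of vectors with
   pairwise distinct valuations has the valuation of one of its terms with a
   nonzero coefficient (the strict ultrametric inequality), hence it vanishes
   only when all coefficients do. *)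

From HB Require Import structures.
From mathcomp Require Import all_boot all_order all_algebra.
From Stdlib Require Import ClassicalEpsilon.
Import Order.TTheory GRing.Theory Num.Theory.
Local Open Scope ring_scope.
Set Implicit Arguments. Unset Strict Implicit.

Section ExtendedOrder.
Variables (T : Type) (lt : T -> T -> Prop).
Hypothesis lt_irr : forall x, ~ lt x x.
Hypothesis lt_trans : forall x y z, lt x y -> lt y z -> lt x z.
Hypothesis lt_total : forall x y, [\/ lt x y, x = y | lt y x].

Lemma ltinf_irr a : ~ ltinf lt a a.
Proof. by case: a => [x|] //=; apply: lt_irr. Qed.

Lemma ltinf_trans a b c : ltinf lt a b -> ltinf lt b c -> ltinf lt a c.
Proof. by case: a => [x|]; case: b => [y|]; case: c => [z|] //=; apply: lt_trans. Qed.

Lemma ltinf_leinf_trans a b c : ltinf lt a b -> leinf lt b c -> ltinf lt a c.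
Proof. by move=> ab [<-|]; last exact: ltinf_trans. Qed.

Lemma ltinf_total a b : [\/ ltinf lt a b, a = b | ltinf lt b a].
Proof.
case: a => [x|]; case: b => [y|] /=; try by [constructor 1|constructor 2|constructor 3].
by case: (lt_total x y) => [h|->|h]; [constructor 1|constructor 2|constructor 3].
Qed.

Lemma mininf_l a b : ltinf lt a b -> mininf lt a b = a.
Proof.
rewrite /mininf => ab; case: excluded_middle_informative => // ba.
by case: (ltinf_irr (ltinf_trans ab ba)).
Qed.

Lemma ltinf_mininf a b c : ltinf lt a b -> ltinf lt a c -> ltinf lt a (mininf lt b c).
Proof. by rewrite /mininf; case: excluded_middle_informative. Qed.

End ExtendedOrder.

Section Valuation.
Variables (C : realFieldType) (V : lmodType C) (T : Type) (lt : T -> T -> Prop).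
Hypothesis lt_irr : forall x, ~ lt x x.
Hypothesis lt_trans : forall x y z, lt x y -> lt y z -> lt x z.
Hypothesis lt_total : forall x y, [\/ lt x y, x = y | lt y x].
Variable w : V -> option T.
Hypothesis valuation_eq0 : forall x, w x = None <-> x = 0.
Hypothesis valuationD : forall x y, leinf lt (mininf lt (w x) (w y)) (w (x + y)).
Hypothesis valuationZ : forall (l : C) x, l != 0 -> w (l *: x) = w x.

Lemma valuationN x : w (- x) = w x.
Proof. by rewrite -scaleN1r valuationZ // oppr_eq0 oner_eq0. Qed.

Lemma valuationD_lt x y : ltinf lt (w x) (w y) -> w (x + y) = w x.
Proof.
(* Otherwise w x < w (x + y), and the ultrametric inequality for
   x = (x + y) - y gives w x > w x. *)
move=> xy; have := valuationD x y; rewrite mininf_l // => -[//|x_xy].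
have := valuationD (x + y) (- y); rewrite valuationN addrK => xy_x.
have x_min : ltinf lt (w x) (mininf lt (w (x + y)) (w y)) by exact: ltinf_mininf.
by case: (ltinf_irr lt_irr (ltinf_leinf_trans lt_trans x_min xy_x)).
Qed.

Lemma valuationD_neq x y : w x <> w y -> w (x + y) = w x \/ w (x + y) = w y.
Proof.
move=> xy; case: (ltinf_total lt_total (w x) (w y)) => [lt_xy|//|lt_yx].
- by left; apply: valuationD_lt.
- by right; rewrite addrC; apply: valuationD_lt.
Qed.

Lemma valuation_lin_comb (s : seq V) (c : V -> C) :
    uniq s -> {in s &, injective w} ->
  {in s, forall x, c x = 0} \/
  exists2 x, x \in s & w (\sum_(y <- s) c y *: y) = w x.
Proof.
elim: s => [|a s IH] /=; first by left.
case/andP=> as_ us inj_w.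
have inj_ws : {in s &, injective w} by move=> x y xs ys; apply: inj_w; rewrite inE ?xs ?ys orbT.
rewrite big_cons; have [ca0 | ca0] := eqVneq (c a) 0.
  rewrite ca0 scale0r add0r; case: (IH us inj_ws) => [s0|[x xs ->]].
    by left=> x; rewrite inE => /orP[/eqP->|/s0].
  by right; exists x => //; rewrite inE xs orbT.
right; have wca : w (c a *: a) = w a by rewrite valuationZ.
case: (IH us inj_ws) => [s0|[x xs wsum]].
  exists a; first exact: mem_head.
  by rewrite big_seq big1 ?addr0 // => i /s0 ->; rewrite scale0r.
have xas : x \in a :: s by rewrite inE xs orbT.
have neq : w (c a *: a) <> w (\sum_(y <- s) c y *: y).
  rewrite wca wsum => /(inj_w a x (mem_head a s) xas) eq_ax.
  by move: as_; rewrite eq_ax xs.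
by case: (valuationD_neq neq) => ->; [exists a => //; apply: mem_head | exists x].
Qed.

Lemma valuation_separated_lin_indep (s : seq V) (c : V -> C) :
    uniq s -> {in s &, injective w} -> {in s, forall x, x != 0} ->
  \sum_(x <- s) c x *: x = 0 -> {in s, forall x, c x = 0}.
Proof.
move=> us inj_w nz sum0; case: (valuation_lin_comb c us inj_w) => [//|[x xs]].
rewrite sum0 (proj2 (valuation_eq0 0)) // => /esym /valuation_eq0 x0.
by move: (nz x xs); rewrite x0 eqxx.
Qed.

End Valuation.

Theorem lemma4p3 (C : realFieldType) (G : lmodType C)
    (lt0 lt1 : G -> G -> Prop) (v : G -> option G) :
  hamel_space lt0 lt1 v ->
  lin_indep (fun g : G => exists x : G, x != 0 /\ v x = Some g).
Proof.
case=> [[lt_irr lt_trans lt_total _ _] _ [v_eq0 [vD vZ _ v_idem _]]] s c us vs.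
have v_fix g : g \in s -> v g = Some g.
  by case/vs=> x [_ vx]; rewrite -vx -[RHS](v_idem x) vx.
have v_inj : {in s &, injective v}.
  by move=> g h gs hs; rewrite v_fix // v_fix // => -[].
have s_nz : {in s, forall g, g != 0}.
  by move=> g gs; apply/eqP => g0; move: (v_fix g gs); rewrite g0 (proj2 (v_eq0 0)).
move=> sum0.
exact: (valuation_separated_lin_indep lt_irr lt_trans lt_total v_eq0 vD vZ
          us v_inj s_nz sum0).
Qed.
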